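(* Let $\varepsilon>0$, $c>0$, and let $G$ be a graph with $m$ edges, clique number $\omega=\omega(G)\ge 3$, and $t(G)\le c\,m^{1.5-\varepsilon}$. If $m\ge \big(10.06\,c\sqrt{\omega}\big)^{1/\varepsilon}$, then \[\Lambda_\ell(G)\le 2\left(1-\frac{1}{\omega}\right),\] where $\ell=\min\{n^+,\omega\}$.
   Context: For a simple graph $G$ on $n$ vertices and $m$ edges, let $\lambda_1\ge\cdots\ge\lambda_n$ be the eigenvalues of its adjacency matrix; $n^+$ is the number of positive eigenvalues. $\omega(G)$ is the clique number and $t(G)$ the number of triangles. $s_k(G)=\sum_{i=1}^k\lambda_i^2$ and $\Lambda_k(G)=s_k(G)/m$. *)

From HB Require Import structures.
From mathcomp Require Import all_boot all_order all_algebra.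
From mathcomp Require Import reals exp.
Set Implicit Arguments. Unset Strict Implicit. Unset Printing Implicit Defensive.
Import Order.TTheory GRing.Theory Num.Theory.
Local Open Scope ring_scope.

Definition simple_graph (n : nat) (adj : rel 'I_n) : Prop :=
  (forall i j, adj i j = adj j i) /\ (forall i, ~~ adj i i).

Definition adjmx (R : realType) (n : nat) (adj : rel 'I_n) : 'M[R]_n :=
  \matrix_(i, j) (adj i j)%:R.

Definition nedges (n : nat) (adj : rel 'I_n) : nat :=
  #|[set p : 'I_n * 'I_n | (p.1 < p.2)%N && adj p.1 p.2]|.

Definition is_clique (n : nat) (adj : rel 'I_n) (S : {set 'I_n}) : bool :=
  [forall i in S, forall j in S, (i != j) ==> adj i j].

Definition clique_number (n : nat) (adj : rel 'I_n) : nat :=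
  \max_(S : {set 'I_n} | is_clique adj S) #|S|.

Definition ntriangles (n : nat) (adj : rel 'I_n) : nat :=
  #|[set S : {set 'I_n} | (#|S| == 3)%N && is_clique adj S]|.

(* ev is the list of eigenvalues (with multiplicity) of A, in non-increasing
   order: lambda_1 >= ... >= lambda_n, i.e. char_poly A = prod (X - lambda_i). *)
Definition sorted_eigenvalues (R : realType) (n : nat) (A : 'M[R]_n)
    (ev : seq R) : Prop :=
  [/\ size ev = n, sorted (fun x y : R => y <= x) ev &
      char_poly A = \prod_(x <- ev) ('X - x%:P)].

Definition npos (R : realType) (ev : seq R) : nat := count (fun x => 0 < x) ev.

Definition sk (R : realType) (ev : seq R) (k : nat) : R :=
  \sum_(i < k) ev`_i ^+ 2.

Definition Lambdak (R : realType) (ev : seq R) (k m : nat) : R :=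
  sk ev k / m%:R.

(* The traces of A^2 and A^3 count closed walks, so the eigenvalues satisfy
   sum l^2 <= 2m and sum l^3 <= 6t.  Split the spectrum into the first ell
   eigenvalues, which are positive, and the rest, with square sums S and M.
   On the head 3 a l^2 <= 2 l^3 + a^3 for every a >= 0; with
   a = sqrt (S / omega) and ell <= omega this gives
   sum l^3 >= S^(3/2) / sqrt omega.  On the tail |l| <= sqrt M, so
   sum l^3 >= - M^(3/2).  If S > 2m (1 - 1/omega) >= 4m/3 then M < 2m/omega
   and 6 t sqrt omega >= S^(3/2) - sqrt omega M^(3/2)
   > ((4/3)^(3/2) - 2 sqrt 2 / 3) m^(3/2) > (6 / 10.06) m^(3/2), whereas the
   hypotheses give t <= c m^(3/2 - eps) <= m^(3/2) / (10.06 sqrt omega). *)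

From HB Require Import structures.
From mathcomp Require Import all_boot all_order all_algebra.
From mathcomp Require Import reals exp.
From mathcomp Require Import complex spectral mxred.
From mathcomp Require Import ring lra.
Import Order.TTheory GRing.Theory Num.Theory.
Local Open Scope ring_scope.
Set Implicit Arguments. Unset Strict Implicit. Unset Printing Implicit Defensive.

Section CubeBounds.
Variable R : realFieldType.
Implicit Types (a x p q w z t : R) (s : seq R).

Lemma three_mul_sqr_le_cubes a x : 0 <= a -> 0 <= x ->
  3 * a * x ^+ 2 <= 2 * x ^+ 3 + a ^+ 3.
Proof.
move=> a0 x0; have : 0 <= (x - a) ^+ 2 * (2 * x + a).
  by apply: mulr_ge0; [exact: sqr_ge0 | lra].
by move=> h; nra.
Qed.

Lemma sum_cubes_ge_head s w p : all (fun x => 0 <= x) s -> 0 < w ->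
  (size s)%:R <= w ^+ 2 -> 0 <= p -> p ^+ 2 = \sum_(x <- s) x ^+ 2 ->
  p ^+ 3 <= w * \sum_(x <- s) x ^+ 3.
Proof.
move=> /allP s0 w0 sw p0 ep; set a := p / w.
have a0 : 0 <= a by rewrite divr_ge0 // ltW.
have tangent : 3 * a * p ^+ 2 <= 2 * \sum_(x <- s) x ^+ 3 + (size s)%:R * a ^+ 3.
  rewrite ep mulr_sumr mulr_sumr -(sum1_size s) natr_sum mulr_suml -big_split /=.
  rewrite big_seq [X in _ <= X]big_seq; apply: ler_sum => x xs.
  by rewrite mul1r three_mul_sqr_le_cubes // s0.
have size_le : (size s)%:R * a ^+ 3 <= w ^+ 2 * a ^+ 3.
  by rewrite ler_wpM2r // exprn_ge0.
have e1 : w ^+ 2 * a ^+ 3 = p ^+ 3 / w by rewrite /a; field; rewrite gt_eqF.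
have e2 : 3 * a * p ^+ 2 = 3 * (p ^+ 3 / w) by rewrite /a; field; rewrite gt_eqF.
have : p ^+ 3 / w <= \sum_(x <- s) x ^+ 3 by lra.
by rewrite ler_pdivrMr // mulrC.
Qed.

Lemma sum_cubes_ge_tail s q : 0 <= q -> q ^+ 2 = \sum_(x <- s) x ^+ 2 ->
  - q ^+ 3 <= \sum_(x <- s) x ^+ 3.
Proof.
move=> q0 qs; rewrite exprSr qs mulr_suml -sumrN big_seq.
rewrite [X in _ <= X]big_seq; apply: ler_sum => x xs.
have : x ^+ 2 <= q ^+ 2.
  rewrite qs (perm_big _ (perm_to_rem xs)) big_cons lerDl.
  by apply: sumr_ge0 => y _; exact: sqr_ge0.
move=> xq; have x_ge : - q <= x by rewrite leNgt; apply/negP => xlt; nra.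
have : 0 <= x ^+ 2 * (x + q) by apply: mulr_ge0; [exact: sqr_ge0 | lra].
by move=> h; rewrite exprSr; lra.
Qed.

Lemma cube_gap_lb z w p q : 0 < z -> 0 <= w -> 0 <= p -> 0 <= q ->
  4 / 3 * z ^+ 2 <= p ^+ 2 -> p ^+ 2 + q ^+ 2 <= 2 * z ^+ 2 ->
  (w * q) ^+ 2 <= 2 * z ^+ 2 ->
  600 / 1006 * z ^+ 3 < p ^+ 3 - w * q ^+ 3.
Proof.
move=> z0 w0 p0 q0 pz pqz wqz; have z0' := ltW z0.
(* 209/181 and 99/70 are rational bounds for sqrt (4/3) and sqrt 2; the final
   margin over 600/1006 is about 3e-4. *)
have p_lb : 209 / 181 * z <= p.
  by rewrite -ler_sqr ?nnegrE ?mulr_ge0 //; nra.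
have wq_ub : w * q <= 99 / 70 * z.
  by rewrite -ler_sqr ?nnegrE ?mulr_ge0 //; nra.
have p3 : (209 / 181 * z) ^+ 3 <= p ^+ 3.
  by rewrite ler_pXn2r ?nnegrE ?mulr_ge0 //; lra.
have wq3 : w * q ^+ 3 <= 99 / 70 * z * (2 / 3 * z ^+ 2).
  have -> : w * q ^+ 3 = (w * q) * q ^+ 2 by ring.
  by apply: ler_pM => //; [exact: mulr_ge0 | exact: sqr_ge0 | lra].
have z3 : 0 < z ^+ 3 by exact: exprn_gt0.
nra.
Qed.

Lemma head_sqr_le z w p q t : 0 < z -> 0 < w -> 3 <= w ^+ 2 -> 0 <= p -> 0 <= q ->
  p ^+ 2 + q ^+ 2 <= 2 * z ^+ 2 -> p ^+ 3 - w * q ^+ 3 <= 6 * t * w ->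
  t * (1006 / 100 * w) <= z ^+ 3 ->
  p ^+ 2 <= 2 * z ^+ 2 * (1 - 1 / w ^+ 2).
Proof.
move=> z0 w0 w3 p0 q0 pqz cubes tz; rewrite leNgt; apply/negP.
set u := 1 / w ^+ 2 => pz.
have uw : u * w ^+ 2 = 1 by rewrite /u mul1r mulVf // expf_neq0 // gt_eqF.
have u0 : 0 <= u by rewrite /u divr_ge0 // sqr_ge0.
have u3 : u <= 1 / 3 by nra.
have pz' : 4 / 3 * z ^+ 2 <= p ^+ 2 by nra.
have qz : q ^+ 2 <= 2 * z ^+ 2 * u by lra.
have wqz : (w * q) ^+ 2 <= 2 * z ^+ 2.
  rewrite exprMn; apply: le_trans (_ : w ^+ 2 * (2 * z ^+ 2 * u) <= _).
    by rewrite ler_wpM2l ?sqr_ge0.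
  have -> : w ^+ 2 * (2 * z ^+ 2 * u) = 2 * z ^+ 2 * (u * w ^+ 2) by ring.
  by rewrite uw mulr1.
have := cube_gap_lb z0 (ltW w0) p0 q0 pz' pqz wqz.
have : 6 * t * w <= 600 / 1006 * z ^+ 3 by lra.
lra.
Qed.

End CubeBounds.

Lemma sqrt_cube_ge_of_powR_bounds (R : realType) (eps c k w m t : R) :
  0 < eps -> 0 < c -> 0 < k -> 0 < w ->
  t <= c * powR m (3 / 2 - eps) -> powR (k * c * w) (1 / eps) <= m ->
  t * (k * w) <= Num.sqrt m ^+ 3.
Proof.
move=> eps0 c0 k0 w0 tm km.
have kcw0 : 0 < k * c * w by rewrite !mulr_gt0.
have m0 : 0 < m by apply: lt_le_trans km; exact: powR_gt0.
have kcw_le : k * c * w <= powR m eps.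
  have -> : k * c * w = powR (powR (k * c * w) (1 / eps)) eps.
    by rewrite -powRrM mul1r mulVf ?gt_eqF // powRr1 // ltW.
  by apply: ge0_ler_powR; rewrite ?nnegrE ?powR_ge0 // ltW.
have me : powR m (3 / 2 - eps) * powR m eps = Num.sqrt m ^+ 3.
  have m_neq0 : m != 0 by rewrite gt_eqF.
  rewrite -powRD ?m_neq0 ?implybT // subrK.
  have -> : (3 / 2 : R) = 1 + 2^-1 by field.
  rewrite powRD ?m_neq0 ?implybT // powRr1 ?ltW // powR12_sqrt ?ltW //.
  by rewrite exprSr sqr_sqrtr ?ltW.
have p0 : 0 <= powR m (3 / 2 - eps) by exact: powR_ge0.
have [t0|t0] := leP 0 t; last first.
  apply: le_trans (exprn_ge0 _ (sqrtr_ge0 _)).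
  by rewrite nmulr_rle0 // mulr_ge0 // ltW.
rewrite -me; nra.
Qed.

Lemma sorted_take_count_gt0 (R : realDomainType) (s : seq R) k :
  sorted (fun x y : R => y <= x) s -> (k <= count (fun x : R => (0 < x)%R) s)%N ->
  all (fun x => 0 < x) (take k s).
Proof.
elim: s k => [|x s IHs] [|k] //= xs.
have [x0|x0] := ltP 0 x.
  by rewrite /= add1n ltnS; apply: IHs; exact: path_sorted xs.
have xge : all (fun y => y <= x) s.
  by apply: order_path_min xs => a b d ba db; exact: le_trans db ba.
suff -> : count (fun y => 0 < y) s = 0%N by [].
apply/eqP; rewrite -leqn0 leqNgt -has_count; apply/hasP => -[y ys y0].
by move: (lt_le_trans y0 (le_trans (allP xge y ys) x0)); rewrite ltxx.
Qed.

Lemma sum_nth_take (R : nmodType) (s : seq R) k (F : R -> R) :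
  (k <= size s)%N -> \sum_(i < k) F s`_i = \sum_(x <- take k s) F x.
Proof.
move=> ks; rewrite (big_nth 0) size_takel // big_mkord.
by apply: eq_bigr => i _; rewrite nth_take.
Qed.

Lemma sum_sqr_take_le (R : realType) (s : seq R) l (om m t : R) :
  3 <= om -> 0 < m -> l%:R <= om -> all (fun x => 0 <= x) (take l s) ->
  \sum_(x <- s) x ^+ 2 <= 2 * m -> \sum_(x <- s) x ^+ 3 <= 6 * t ->
  t * (1006 / 100 * Num.sqrt om) <= Num.sqrt m ^+ 3 ->
  \sum_(x <- take l s) x ^+ 2 <= 2 * m * (1 - 1 / om).
Proof.
move=> om3 m0 l_om head_ge0 sqr_sum cube_sum tz.
rewrite -(cat_take_drop l s) !big_cat /= in sqr_sum cube_sum.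
set S := \sum_(x <- take l s) x ^+ 2 in sqr_sum *.
set M := \sum_(x <- drop l s) x ^+ 2 in sqr_sum.
have S0 : 0 <= S by rewrite sumr_ge0 // => x _; exact: sqr_ge0.
have M0 : 0 <= M by rewrite sumr_ge0 // => x _; exact: sqr_ge0.
set w := Num.sqrt om in tz.
have w2 : w ^+ 2 = om by rewrite sqr_sqrtr // (le_trans _ om3).
have w0 : 0 < w by rewrite sqrtr_gt0 (lt_le_trans _ om3).
have head_size : (size (take l s))%:R <= w ^+ 2.
  by rewrite w2 (le_trans _ l_om) // ler_nat size_take_min geq_minl.
have head :=
  sum_cubes_ge_head head_ge0 w0 head_size (sqrtr_ge0 S) (sqr_sqrtr S0).
have tail := sum_cubes_ge_tail (sqrtr_ge0 M) (sqr_sqrtr M0).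
have cubes : Num.sqrt S ^+ 3 - w * Num.sqrt M ^+ 3 <= 6 * t * w.
  have := ler_wpM2r (ltW w0) cube_sum; have := ler_wpM2l (ltW w0) tail; lra.
have z0 : 0 < Num.sqrt m by rewrite sqrtr_gt0.
have pqz : Num.sqrt S ^+ 2 + Num.sqrt M ^+ 2 <= 2 * Num.sqrt m ^+ 2.
  by rewrite !sqr_sqrtr // ltW.
have w3 : 3 <= w ^+ 2 by rewrite w2.
have := head_sqr_le z0 w0 w3 (sqrtr_ge0 S) (sqrtr_ge0 M) pqz cubes tz.
by rewrite w2 !sqr_sqrtr // ltW.
Qed.

Lemma char_poly_conj (R : comNzRingType) n (P A Q : 'M[R]_n) :
  P *m Q = 1%:M -> char_poly (P *m A *m Q) = char_poly A.
Proof.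
move=> PQ; rewrite /char_poly.
have -> : char_poly_mx (P *m A *m Q) =
    map_mx polyC P *m char_poly_mx A *m map_mx polyC Q.
  rewrite /char_poly_mx mulmxBr mulmxBl -!map_mxM mul_mx_scalar -scalemxAl.
  by rewrite -map_mxM PQ map_mx1 scalemx1.
rewrite !det_mulmx [X in X * _]mulrC -mulrA -det_mulmx -map_mxM PQ map_mx1.
by rewrite det1 mulr1.
Qed.

Lemma exprn_conj (R : pzSemiRingType) (P A Q : R) k :
  P * Q = 1 -> Q * P = 1 -> (P * A * Q) ^+ k = P * A ^+ k * Q.
Proof.
move=> PQ QP; elim: k => [|k IHk]; first by rewrite !expr0 mulr1.
by rewrite exprS IHk -!mulrA (mulrA Q) QP mul1r exprS !mulrA.
Qed.

Section TriangularMatrices.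
Variable R : pzSemiRingType.

Lemma is_trig_mxM n (A B : 'M[R]_n) :
  is_trig_mx A -> is_trig_mx B -> is_trig_mx (A *m B).
Proof.
move=> /is_trig_mxP tA /is_trig_mxP tB; apply/is_trig_mxP => i j lij.
rewrite !mxE big1 // => k _; case: (ltnP i k) => [lik|lki].
  by rewrite tA // mul0r.
by rewrite tB ?mulr0 // (leq_ltn_trans lki lij).
Qed.

Lemma trig_mulmx_diag n (A B : 'M[R]_n) i :
  is_trig_mx A -> is_trig_mx B -> (A *m B) i i = A i i * B i i.
Proof.
move=> /is_trig_mxP tA /is_trig_mxP tB; rewrite !mxE (bigD1 i) //= big1 ?addr0 //.
move=> k nki; case: (ltngtP i k) => [lik|lki|eik]; first by rewrite tA // mul0r.
  by rewrite tB ?mulr0.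
by move: nki; rewrite (val_inj eik) eqxx.
Qed.

Lemma is_trig_mxX n (A : 'M[R]_n.+1) k : is_trig_mx A -> is_trig_mx (A ^+ k).
Proof.
move=> tA; elim: k => [|k IHk]; first exact: scalar_mx_is_trig.
by rewrite exprS -mulmxE is_trig_mxM.
Qed.

Lemma trig_mxX_diag n (A : 'M[R]_n.+1) k i :
  is_trig_mx A -> (A ^+ k) i i = A i i ^+ k.
Proof.
move=> tA; elim: k => [|k IHk]; first by rewrite !expr0 mxE eqxx.
by rewrite !exprS -mulmxE trig_mulmx_diag ?is_trig_mxX // IHk.
Qed.

End TriangularMatrices.

Lemma mxtrace_exprn_closed (C : numClosedFieldType) n (A : 'M[C]_n.+1) s k :
  char_poly A = \prod_(x <- s) ('X - x%:P) -> \tr (A ^+ k) = \sum_(x <- s) x ^+ k.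
Proof.
have [P Pu] := Schur A (ltn0Sn n); have Pinv := unitarymx_unit Pu.
rewrite /similar_to /conjmx pinvmxE //= => tT.
have eT : char_poly (P *m A *m invmx P) = char_poly A.
  by apply: char_poly_conj; rewrite mulmxV.
rewrite -eT (char_poly_trig tT) -(big_map _ xpredT (fun x => 'X - x%:P)).
move=> /prod_XsubC_eq hs; rewrite -(perm_big _ hs) big_map.
have -> : \tr (A ^+ k) = \tr ((P *m A *m invmx P) ^+ k).
  rewrite mulmxE exprn_conj -?mulmxE ?mulmxV ?mulVmx // mxtrace_mulC mulmxA.
  by rewrite mulVmx // mul1mx.
by apply: eq_bigr => i _; rewrite trig_mxX_diag.
Qed.

Lemma mxtrace_exprn_real (R : rcfType) n (A : 'M[R]_n.+1) s k :
  char_poly A = \prod_(x <- s) ('X - x%:P) -> \tr (A ^+ k) = \sum_(x <- s) x ^+ k.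
Proof.
move=> hA; pose f := real_complex R.
have hC : char_poly (map_mx f A) = \prod_(y <- map f s) ('X - y%:P).
  by rewrite -map_char_poly hA map_prod_XsubC big_map.
move: (mxtrace_exprn_closed k hC).
rewrite -rmorphXn trace_map_mx big_map.
under eq_bigr do rewrite -rmorphXn.
by rewrite -rmorph_sum => /complexI.
Qed.

Lemma card_set3 (T : finType) (a b c : T) :
  a != b -> b != c -> c != a -> #|[set a; b; c]| = 3%N.
Proof.
move=> ab bc ca; rewrite setUC !cardsU1 cards1 !inE.
by rewrite (negbTE ca) eq_sym (negbTE bc) ab.
Qed.

Lemma card_orderings3_le (T : finType) (S : {set T}) : #|S| = 3%N ->
  (#|[set x : T * T * T | [&& x.1.1 != x.1.2, x.1.2 != x.2, x.2 != x.1.1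
                            & [set x.1.1; x.1.2; x.2] == S]]| <= 6)%N.
Proof.
move=> S3; have /card_gt2P [a [b [c [[aS bS cS] [ab bc ca]]]]] : (2 < #|S|)%N.
  by rewrite S3.
have eS : [set a; b; c] = S.
  apply/eqP; rewrite eqEcard S3 card_set3 // leqnn andbT.
  by apply/subsetP => u; rewrite !inE => /orP[/orP[]|] /eqP->.
pose orderings :=
  [:: (a, b, c); (a, c, b); (b, a, c); (b, c, a); (c, a, b); (c, b, a)].
apply: (@leq_trans #|orderings|); last exact: card_size.
apply/subset_leq_card/subsetP => -[[i j] k]; rewrite inE /=.
move=> /and4P[ij jk ki /eqP eijk].
have mem u : u \in [set i; j; k] -> [\/ u = a, u = b | u = c].
  rewrite eijk -eS !inE => /orP[/orP[]|] /eqP->;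
  by [exact: Or31 | exact: Or32 | exact: Or33].
move: (mem i) (mem j) (mem k) ij jk ki; rewrite !inE !eqxx ?orbT /=.
by move=> /(_ isT) + /(_ isT) + /(_ isT);
  case=> -> [] -> [] ->; rewrite ?eqxx //= => _ _ _; rewrite ?inE ?eqxx ?orbT.
Qed.

Section GraphCounting.
Variables (n : nat) (adj : rel 'I_n).

Definition arcs := [set p : 'I_n * 'I_n | adj p.1 p.2].

Definition closed_3walks :=
  [set x : 'I_n * 'I_n * 'I_n |
    [&& adj x.1.1 x.1.2, adj x.1.2 x.2 & adj x.2 x.1.1]].

Lemma clique_number_le : (clique_number adj <= n)%N.
Proof.
by apply/bigmax_leqP => S _; apply: leq_trans (max_card _) _; rewrite card_ord.
Qed.

Hypothesis adj_simple : simple_graph adj.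

Lemma card_arcs_le : (#|arcs| <= 2 * nedges adj)%N.
Proof.
have [adjC adjN] := adj_simple.
set E := [set p : 'I_n * 'I_n | (p.1 < p.2)%N && adj p.1 p.2].
pose swap (p : 'I_n * 'I_n) := (p.2, p.1).
have sub_arcs : arcs \subset E :|: swap @: E.
  apply/subsetP => -[i j]; rewrite inE /= => ij.
  case: (ltngtP i j) => [lij|lji|eij].
  - by rewrite inE inE /= lij ij.
  - apply/setUP; right; apply/imsetP.
    by exists (j, i); rewrite // inE /= lji adjC.
  - by move: ij; rewrite (val_inj eij) (negbTE (adjN j)).
rewrite (leq_trans (subset_leq_card sub_arcs)) //.
rewrite (leq_trans (leq_card_setU _ _)) //.
by rewrite mul2n -addnn leq_add2l leq_imset_card.
Qed.

Lemma card_closed_3walks_le : (#|closed_3walks| <= 6 * ntriangles adj)%N.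
Proof.
have [adjC adjN] := adj_simple.
have adjF v : adj v v = false by apply: negbTE.
pose vertex_set (x : 'I_n * 'I_n * 'I_n) := [set x.1.1; x.1.2; x.2].
pose triangle (S : {set 'I_n}) := (#|S| == 3)%N && is_clique adj S.
have walk_distinct x : x \in closed_3walks ->
    [&& x.1.1 != x.1.2, x.1.2 != x.2 & x.2 != x.1.1].
  case: x => [[i j] k]; rewrite inE /= => /and3P[ij jk ki].
  apply/and3P; split; [move: ij | move: jk | move: ki];
  by apply: contraTneq => ->; rewrite adjF.
have walk_triangle x : x \in closed_3walks -> triangle (vertex_set x).
  move=> wx; have /and3P[d1 d2 d3] := walk_distinct x wx.
  rewrite /triangle card_set3 //=; case: x wx d1 d2 d3 => [[i j] k].
  rewrite inE /= => /and3P[ij jk ki] _ _ _.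
  apply/forall_inP => u; rewrite !inE => /orP[/orP[]|] /eqP->;
  apply/forall_inP => v; rewrite !inE => /orP[/orP[]|] /eqP->;
  by rewrite ?eqxx //= ?ij ?jk ?ki ?implybT // adjC ?ij ?jk ?ki implybT.
rewrite -sum1_card (partition_big vertex_set triangle) //= /ntriangles -/triangle.
rewrite mulnC -sum_nat_cond_const; apply: leq_sum => S /andP[/eqP S3 _].
rewrite sum1_card; apply: leq_trans (card_orderings3_le S3).
apply/subset_leq_card/subsetP => x; rewrite !inE => /andP[wx /eqP <-].
by have /and3P[-> -> ->] := walk_distinct _ wx; rewrite /= eqxx.
Qed.

End GraphCounting.

Lemma natr_card_set (R : pzSemiRingType) (T : finType) (P : pred T) :
  (#|[set x | P x]|)%:R = \sum_x (P x)%:R :> R.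
Proof.
rewrite -sum1_card big_mkcond natr_sum; apply: eq_bigr => x _.
by rewrite inE; case: (P x).
Qed.

Section AdjacencyTraces.
Variables (R : realType) (n : nat) (adj : rel 'I_n.+1).
Local Notation A := (adjmx R adj).

Lemma mxtrace_adjmx_sqr : simple_graph adj -> \tr (A ^+ 2) = #|arcs adj|%:R.
Proof.
move=> [adjC _]; rewrite natr_card_set.
rewrite -(pair_big xpredT xpredT (fun i j => (adj i j)%:R)) /=.
apply: eq_bigr => i _; rewrite expr2 -mulmxE mxE; apply: eq_bigr => j _.
by rewrite !mxE -natrM mulnb (adjC j i) andbb.
Qed.

Lemma mxtrace_adjmx_cube : \tr (A ^+ 3) = #|closed_3walks adj|%:R.
Proof.
rewrite natr_card_set -(pair_big xpredT xpredT
  (fun ij k => [&& adj ij.1 ij.2, adj ij.2 k & adj k ij.1]%:R)) /=.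
rewrite -(pair_big xpredT xpredT
  (fun i j => \sum_k [&& adj i j, adj j k & adj k i]%:R)) /=.
apply: eq_bigr => i _; rewrite exprS expr2 -!mulmxE mxE; apply: eq_bigr => j _.
rewrite !mxE mulr_sumr; apply: eq_bigr => k _.
by rewrite !mxE -!natrM !mulnb andbA.
Qed.

Lemma sum_sqr_eigenvalues_le (ev : seq R) : simple_graph adj ->
  char_poly A = \prod_(x <- ev) ('X - x%:P) ->
  \sum_(x <- ev) x ^+ 2 <= 2 * (nedges adj)%:R.
Proof.
move=> adj_simple ev_char; rewrite -(mxtrace_exprn_real 2 ev_char).
by rewrite mxtrace_adjmx_sqr // -natrM ler_nat card_arcs_le.
Qed.

Lemma sum_cube_eigenvalues_le (ev : seq R) : simple_graph adj ->
  char_poly A = \prod_(x <- ev) ('X - x%:P) ->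
  \sum_(x <- ev) x ^+ 3 <= 6 * (ntriangles adj)%:R.
Proof.
move=> adj_simple ev_char; rewrite -(mxtrace_exprn_real 3 ev_char).
by rewrite mxtrace_adjmx_cube -natrM ler_nat card_closed_3walks_le.
Qed.

End AdjacencyTraces.

Theorem mainTheorem3 (R : realType) (eps c : R) (n : nat) (adj : rel 'I_n)
  (ev : seq R) :
  0 < eps -> 0 < c -> simple_graph adj ->
  (3 <= clique_number adj)%N ->
  (ntriangles adj)%:R <= c * powR (nedges adj)%:R (3 / 2 - eps) ->
  powR (1006 / 100 * c * Num.sqrt (clique_number adj)%:R) (1 / eps)
    <= (nedges adj)%:R ->
  sorted_eigenvalues (adjmx R adj) ev ->
  Lambdak ev (minn (npos ev) (clique_number adj)) (nedges adj)
    <= 2 * (1 - 1 / (clique_number adj)%:R).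
Proof.
case: n adj ev => [|n] adj ev eps0 c0 adj_simple om3.
  by have := leq_trans om3 (clique_number_le adj).
move=> tri_le m_ge [_ ev_sorted ev_char].
set om := clique_number adj in om3 tri_le m_ge *.
set m := nedges adj in tri_le m_ge *.
set l := minn (npos ev) om.
have w0 : 0 < Num.sqrt (om%:R : R) by rewrite sqrtr_gt0 ltr0n (leq_trans _ om3).
have k0 : 0 < 1006 / 100 :> R by lra.
have m0 : 0 < m%:R :> R.
  by apply: lt_le_trans m_ge; apply/powR_gt0/mulr_gt0 => //; exact: mulr_gt0.
have l_size : (l <= size ev)%N by rewrite (leq_trans (geq_minl _ _)) ?count_size.
rewrite /Lambdak /sk (sum_nth_take (fun x => x ^+ 2) l_size).
rewrite ler_pdivrMr // mulrAC.
apply: sum_sqr_take_le.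
- by rewrite ler_nat.
- exact: m0.
- by rewrite ler_nat geq_minr.
- by apply: sub_all (sorted_take_count_gt0 ev_sorted (geq_minl _ _)) => x /ltW.
- exact: sum_sqr_eigenvalues_le adj_simple ev_char.
- exact: sum_cube_eigenvalues_le adj_simple ev_char.
- exact: sqrt_cube_ge_of_powR_bounds eps0 c0 k0 w0 tri_le m_ge.
Qed.
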